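(* Let $0\le\delta\le0.01$, $s\ge1$, $\Delta\in X$, and let $L\subset\mathbb{R}^3$ be a $\Delta$-rational plane. Let $\Omega(\Delta,L,s)$ be the set of nonzero $v\in\Delta\cap L$ with $\kappa(v)<e^{-3s}$. Then for every subset $\mathcal{T}\subseteq\Omega(\Delta,L,s)$, $$\int_{-1}^{1}\sup_{v\in\mathcal{T}}\phi_\delta(a_su_rv)\,dr\le200e^{-\delta s}\sup_{v\in\mathcal{T}}\phi_\delta(v).$$
   Context: $X$ is the space of unimodular lattices in $\mathbb{R}^3$; a subspace $L$ is $\Delta$-rational if $L\cap\Delta$ is a lattice in $L$. $\|\cdot\|$ is the supremum norm, $Q_0(v)=v_2^2-2v_1v_3$, $a_t=\mathrm{diag}(e^t,1,e^{-t})$, $u_r=\begin{pmatrix}1&r&r^2/2\\0&1&r\\0&0&1\end{pmatrix}$. For $w=(w_1,w_2,w_3)\ne0$: if $w_2=w_3=0$ put $\kappa(w)=1$; otherwise with $\rho(w)=-w_2/w_3$ and $\kappa_0(w)=Q_0(w)/w_3^2$ put $\kappa(w)=|\kappa_0(w)|$ if $|\kappa_0(w)|<1$ and $|\rho(w)|<2$, and $\kappa(w)=1$ otherwise. $\phi_\delta(w)=\kappa(w)^{-2\delta}\|w\|^{-1-\delta}\in(0,\infty]$. *)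

From HB Require Import structures.
From mathcomp Require Import all_boot all_order all_algebra.
From mathcomp Require Import all_classical all_reals all_analysis.
Set Implicit Arguments. Unset Strict Implicit. Unset Printing Implicit Defensive.
Import Order.TTheory GRing.Theory Num.Theory.
Local Open Scope ring_scope.
Local Open Scope classical_set_scope.

Section Defs.
Variable R : realType.

Definition mact (g : 'M[R]_3) (v : 'rV[R]_3) : 'rV[R]_3 := (g *m v^T)^T.

Definition c1 (v : 'rV[R]_3) : R := v 0 0.
Definition c2 (v : 'rV[R]_3) : R := v 0 1.
Definition c3 (v : 'rV[R]_3) : R := v 0 2%:R.

Definition supnorm (v : 'rV[R]_3) : R := \big[Num.max/0]_(i < 3) `|v 0 i|.

Definition unimodular_lattice (D : set 'rV[R]_3) : Prop :=
  exists g : 'M[R]_3, `|\det g| = 1 /\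
    D = [set v | exists k : 'rV[int]_3, v = map_mx (fun x : int => x%:~R) k *m g].

(* Lambda is a lattice in the subspace L (given as the row space of a matrix):
   a discrete additive subgroup contained in L and spanning L. *)
Definition lattice_in (Lam : set 'rV[R]_3) (L : 'M[R]_3) : Prop :=
  [/\ (forall v, Lam v -> (v <= L)%MS),
      Lam 0, (forall v w, Lam v -> Lam w -> Lam (v - w)),
      (exists2 eps : R, 0 < eps & forall v, Lam v -> v != 0 -> eps <= supnorm v) &
      (exists B : 'M[R]_3, (forall i, Lam (row i B)) /\ (B == L)%MS)].

Definition rational_plane (D : set 'rV[R]_3) (L : 'M[R]_3) : Prop :=
  \rank L = 2%N /\ lattice_in (fun v => D v /\ (v <= L)%MS) L.

Definition Q0 (v : 'rV[R]_3) : R := c2 v ^+ 2 - 2 * c1 v * c3 v.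

(* kappa; when w_3 = 0 (rho(w) = infinity, or w_2 = w_3 = 0) kappa = 1 *)
Definition kappa (w : 'rV[R]_3) : R :=
  if c3 w == 0 then 1 else
  let rho := - c2 w / c3 w in
  let k0 := Q0 w / c3 w ^+ 2 in
  if (`|k0| < 1) && (`|rho| < 2) then `|k0| else 1.

Definition phi (delta : R) (w : 'rV[R]_3) : \bar R :=
  if kappa w == 0 then
    (if delta == 0 then ((supnorm w)^-1)%:E else +oo%E)
  else ((kappa w `^ (-2 * delta)) * (supnorm w `^ (-1 - delta)))%:E.

Definition a_mat (t : R) : 'M[R]_3 :=
  \matrix_(i < 3, j < 3)
    (if i == j then (if val i == 0%N then expR t else if val i == 1%N then 1 else expR (- t))
     else 0).

Definition u_mat (r : R) : 'M[R]_3 :=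
  \matrix_(i < 3, j < 3)
    (match val i, val j with
     | 0%N, 0%N | 1%N, 1%N | 2%N, 2%N => 1
     | 0%N, 1%N | 1%N, 2%N => r
     | 0%N, 2%N => r ^+ 2 / 2
     | _, _ => 0 end).

Definition Omega (D : set 'rV[R]_3) (L : 'M[R]_3) (s : R) : set 'rV[R]_3 :=
  [set v | [/\ D v, (v <= L)%MS, v != 0 & kappa v < expR (- (3 * s))]].

End Defs.

(* Write [rho w = - w_2 / w_3] and
   [kappa0 w = Q0 w / w_3^2], so that [kappa = |kappa0|] on Omega.  Under
   [a_s u_r] the coordinate [w_3] is multiplied by [e^-s], [kappa0] by [e^2s],
   and [w_1] becomes [e^s w_3 ((r - rho)^2 - kappa0) / 2].  Hence if [rho v] is
   within [e^-s] of a point [c], then [|a_s u_r v| / |v_3|] is at least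
   [e^-s] and at least the reciprocal of a Lorentzian in [r] of width [4 e^-s]
   centred at [c], while [|v| <= 5/2 |v_3|].  The gain [e^-4 delta s] on
   [kappa^(-2 delta)] pays for the losses [e^(delta s)] and [(5/2)^delta] on
   the norm, so [phi_delta (a_s u_r v) <= 20 e^(-delta s) phi_delta v] times
   that Lorentzian.  On a plane [n_1 w_1 + n_2 w_2 + n_3 w_3 = 0] either [rho]
   is constant or [kappa0] is a quadratic polynomial in [rho], so
   [|kappa0 v| < e^-3s] confines every [rho v], [v] in [T], to the
   [e^-s]-neighbourhoods of two points.  The supremum over [T] is thus bounded
   by two Lorentzians, each of integral at most [pi], and [40 pi < 200]. *)

From HB Require Import structures.
From mathcomp Require Import all_boot all_order all_algebra.
From mathcomp Require Import all_classical all_reals all_analysis.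
From mathcomp Require Import measurable_realfun ring lra.
Set Implicit Arguments. Unset Strict Implicit. Unset Printing Implicit Defensive.
Import Order.TTheory GRing.Theory Num.Theory.
Local Open Scope ring_scope.
Local Open Scope classical_set_scope.

Section Lorentzian.
Import numFieldNormedType.Exports.
Variable R : realType.

Definition lorentzian (k c x : R) : R := k / (1 + (k * (x - c)) ^+ 2).

Lemma lorentzian_ge0 (k c x : R) : 0 <= k -> 0 <= lorentzian k c x.
Proof. by move=> k0; rewrite divr_ge0 // addr_ge0 // sqr_ge0. Qed.

Lemma is_derive_atan_lorentzian (k c x : R) :
  is_derive x 1 (fun y => atan (k * (y - c))) (lorentzian k c x).
Proof.
have lin : is_derive x 1 (fun y : R => k * (y - c)) k.
  by apply: is_derive_eq; rewrite subr0 scaler1.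
by rewrite /lorentzian mulrC; exact: is_derive1_comp (is_derive1_atan _) lin.
Qed.

Lemma continuous_lorentzian (k c : R) : continuous (lorentzian k c).
Proof.
move=> x; suff : lorentzian k c y @[y --> x] --> lorentzian k c x by [].
have lin : k * (y - c) @[y --> x] --> k * (x - c).
  by apply: cvgM; [exact: cvg_cst | apply: cvgB; [exact: cvg_id | exact: cvg_cst]].
apply: cvgM; first exact: cvg_cst.
apply: cvgV; first by rewrite gt_eqF // ltr_pwDl // sqr_ge0.
by apply: cvgD; [exact: cvg_cst | exact: (cvgM lin lin)].
Qed.

Lemma integral_lorentzian_le_pi (k c a b : R) : a < b ->
  (\int[lebesgue_measure]_(x in `[a, b]) (lorentzian k c x)%:E <= pi%:E)%E.
Proof.
move=> ab; pose F y := atan (k * (y - c)).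
have dF (x : R) : is_derive x 1 F (lorentzian k c x) := is_derive_atan_lorentzian k c x.
have cF (x : R) : F y @[y --> x] --> F x.
  by apply: differentiable_continuous; apply/derivable1_diffP; have [] := dF x.
rewrite (@continuous_FTC2 R _ F) //.
- rewrite -EFinB lee_fin /F.
  have := atan_ltpi2 (k * (b - c)); have := atan_gtNpi2 (k * (a - c)); lra.
- by apply: continuous_subspaceT; exact: continuous_lorentzian.
- split; first by move=> x _; have [] := dF x.
  + exact/cvg_at_right_filter/cF.
  + exact/cvg_at_left_filter/cF.
- by move=> x _; rewrite derive1E; have [_ ->] := dF x.
Qed.

Lemma measurable_lorentzian (k c : R) (D : set R) :
  measurable_fun D (EFin \o lorentzian k c).
Proof.
apply/measurable_EFinP; apply: measurable_funTS.
by apply: continuous_measurable_fun; exact: continuous_lorentzian.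
Qed.

Lemma integral_lorentzian_pair_le (K k c1 c2 a b : R) : 0 <= K -> 0 <= k -> a < b ->
  (\int[lebesgue_measure]_(x in `[a, b])
      (K * (lorentzian k c1 x + lorentzian k c2 x))%:E <= (K * (pi *+ 2))%:E)%E.
Proof.
move=> K0 k0 ab.
under eq_integral do rewrite EFinM EFinD.
rewrite ge0_integralZl_EFin //; last 2 first.
- by move=> x _; rewrite adde_ge0 // lee_fin lorentzian_ge0.
- by apply: emeasurable_funD; exact: measurable_lorentzian.
rewrite ge0_integralD //; last 4 first.
- by move=> x _; rewrite lee_fin lorentzian_ge0.
- exact: measurable_lorentzian.
- by move=> x _; rewrite lee_fin lorentzian_ge0.
- exact: measurable_lorentzian.
rewrite EFinM lee_wpmul2l ?lee_fin // mulr2n EFinD.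
by apply: leeD; exact: integral_lorentzian_le_pi.
Qed.
End Lorentzian.

Section Coordinates.
Variable R : realType.
Implicit Types (v : 'rV[R]_3) (s r : R).

Lemma mact_a_u s r v :
  let w := mact (a_mat s *m u_mat r) v in
  [/\ c1 w = expR s * (c1 v + r * c2 v + r ^+ 2 / 2 * c3 v),
      c2 w = c2 v + r * c3 v & c3 w = expR (- s) * c3 v].
Proof.
rewrite /mact /c1 /c2 /c3 /=.
rewrite !mxE !big_ord_recr big_ord0 /= !mxE !big_ord_recr !big_ord0 /= !mxE /=.
have -> : widen_ord (leqnSn 2) (widen_ord (leqnSn 1) ord_max) = 0 :> 'I_3 by exact: val_inj.
have -> : widen_ord (leqnSn 2) ord_max = 1 :> 'I_3 by exact: val_inj.
have -> : ord_max = 2%:R :> 'I_3 by exact: val_inj.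
by split; ring.
Qed.

Lemma supnormE v : supnorm v = Num.max `|c1 v| (Num.max `|c2 v| (Num.max `|c3 v| 0)).
Proof.
rewrite /supnorm /c1 /c2 /c3 !big_ord_recl big_ord0 /=.
have -> : lift ord0 (ord0 : 'I_2) = 1 :> 'I_3 by exact: val_inj.
by have -> : lift ord0 (lift ord0 (ord0 : 'I_1)) = 2%:R :> 'I_3 by exact: val_inj.
Qed.

Lemma norm_coord_le_supnorm v :
  [/\ `|c1 v| <= supnorm v, `|c2 v| <= supnorm v & `|c3 v| <= supnorm v].
Proof. by rewrite supnormE; split; rewrite ?le_max ?lexx ?orbT. Qed.

Lemma supnorm_ge0 v : 0 <= supnorm v.
Proof. by rewrite supnormE !le_max lexx !orbT. Qed.

Lemma supnorm_le v M : 0 <= M ->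
  `|c1 v| <= M -> `|c2 v| <= M -> `|c3 v| <= M -> supnorm v <= M.
Proof. by move=> M0 h1 h2 h3; rewrite supnormE !ge_max h1 h2 h3 M0. Qed.

Lemma supnorm_gt0 v : c3 v != 0 -> 0 < supnorm v.
Proof.
by move=> v3; have [_ _ h] := norm_coord_le_supnorm v; apply: lt_le_trans h; rewrite normr_gt0.
Qed.

Definition rho v := - c2 v / c3 v.
Definition kappa0 v := Q0 v / c3 v ^+ 2.

Lemma kappaE v : kappa v = if c3 v == 0 then 1 else
  if (`|kappa0 v| < 1) && (`|rho v| < 2) then `|kappa0 v| else 1.
Proof. by []. Qed.

Lemma kappa_ge0 v : 0 <= kappa v.
Proof. by rewrite kappaE; case: ifP => //; case: ifP. Qed.

Lemma kappa_lt1 v : kappa v < 1 -> [/\ c3 v != 0, `|rho v| < 2 & kappa v = `|kappa0 v|].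
Proof.
rewrite kappaE; case: eqP => [_|/eqP v3]; first by rewrite ltxx.
by case: ifP => [/andP[_ h] _|_]; [split | rewrite ltxx].
Qed.

Lemma kappa0_le_kappa v : c3 v != 0 -> `|kappa0 v| <= 1 -> `|kappa0 v| <= kappa v.
Proof. by move=> v3 k1; rewrite kappaE (negPf v3); case: ifP. Qed.

Lemma c1_rho_kappa0 v : c3 v != 0 -> c1 v = c3 v * (rho v ^+ 2 - kappa0 v) / 2.
Proof. by move=> v3; rewrite /rho /kappa0 /Q0; field. Qed.

Section Orbit.
Variables (s r : R) (v : 'rV[R]_3).
Hypothesis v3 : c3 v != 0.
Let w := mact (a_mat s *m u_mat r) v.

Lemma c3_orbit : c3 w = (expR s)^-1 * c3 v.
Proof. by have [_ _ ->] := mact_a_u s r v; rewrite expRN. Qed.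

Lemma c1_orbit : c1 w = expR s * c3 v * ((r - rho v) ^+ 2 - kappa0 v) / 2.
Proof. by have [-> _ _] := mact_a_u s r v; rewrite /rho /kappa0 /Q0; field. Qed.

Lemma kappa0_orbit : kappa0 w = expR s ^+ 2 * kappa0 v.
Proof.
rewrite /kappa0 /Q0 c3_orbit; have [-> -> _] := mact_a_u s r v.
by field; rewrite v3 gt_eqF ?expR_gt0.
Qed.

Lemma kappa_orbit_ge : expR s ^+ 2 * `|kappa0 v| <= 1 ->
  expR s ^+ 2 * `|kappa0 v| <= kappa w.
Proof.
have w3 : c3 w != 0 by rewrite c3_orbit mulf_neq0 // invr_eq0 gt_eqF // expR_gt0.
suff -> : expR s ^+ 2 * `|kappa0 v| = `|kappa0 w| by exact: kappa0_le_kappa.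
by rewrite kappa0_orbit (normrM (expR s ^+ 2)) ger0_norm // exprn_ge0 // expR_ge0.
Qed.

End Orbit.

End Coordinates.

Section OrbitEstimate.
Variable R : realType.
Implicit Types (v : 'rV[R]_3) (s r : R).

(* With [x = r - rho v], [y = r - c], [k = kappa0 v] and [e = e^-s], the two
   terms of the maximum are [|w_3| / |v_3|] and [|w_1| / |v_3|] for
   [w = a_s u_r v]. *)
Lemma sqr_spread_le_max (e x y k : R) : 0 < e -> (x - y) ^+ 2 <= e ^+ 2 -> k <= e ^+ 2 ->
  (e + y ^+ 2 / (16 * e)) / 2 <= Num.max e (`|x ^+ 2 - k| / (2 * e)).
Proof.
move=> e0 xy ke.
have -> : (e + y ^+ 2 / (16 * e)) / 2 = (e ^+ 2 + y ^+ 2 / 16) / (2 * e).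
  by field; rewrite gt_eqF.
have [y_small|y_large] := leP (y ^+ 2) (16 * e ^+ 2).
  by rewrite le_max ler_pdivrMr ?mulr_gt0 //; apply/orP; left; nra.
rewrite le_max ler_pM2r ?invr_gt0 ?mulr_gt0 //; apply/orP; right.
have x_large : y ^+ 2 / 2 - e ^+ 2 <= x ^+ 2.
  have := sqr_ge0 (2 * x - y); rewrite !expr2 in xy *; nra.
apply: le_trans (ler_norm _); nra.
Qed.

Lemma supnorm_le_c3 v : c3 v != 0 -> `|rho v| < 2 -> `|kappa0 v| <= 1 ->
  supnorm v <= 5 / 2 * `|c3 v|.
Proof.
move=> v3 rho2 k1; have t0 : 0 < `|c3 v| by rewrite normr_gt0.
have rho_sqr : rho v ^+ 2 <= 4.
  by rewrite -real_normK ?num_real //; have := normr_ge0 (rho v); nra.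
apply: supnorm_le; first by rewrite mulr_ge0 // ltW.
- rewrite c1_rho_kappa0 // !normrM (@ger0_norm _ 2^-1) ?invr_ge0 ?ler0n //.
  have : `|rho v ^+ 2 - kappa0 v| <= 5.
    by apply: le_trans (ler_normB _ _) _; rewrite normrX real_normK ?num_real //; lra.
  nra.
- have -> : c2 v = - rho v * c3 v by rewrite /rho; field.
  rewrite normrM normrN; nra.
- nra.
Qed.

Lemma c3_le_supnorm_orbit s r v :
  `|c3 v| * expR (- s) <= supnorm (mact (a_mat s *m u_mat r) v).
Proof.
have [_ _ +] := norm_coord_le_supnorm (mact (a_mat s *m u_mat r) v).
by have [_ _ ->] := mact_a_u s r v; rewrite normrM ger0_norm ?expR_ge0 // mulrC.
Qed.

Lemma width_le_supnorm_orbit s r c v : c3 v != 0 ->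
  `|rho v - c| <= expR (- s) -> kappa0 v <= expR (- s) ^+ 2 ->
  `|c3 v| * ((expR (- s) + (r - c) ^+ 2 / (16 * expR (- s))) / 2)
    <= supnorm (mact (a_mat s *m u_mat r) v).
Proof.
move=> v3 near_c small_k; set w := mact _ v; set e := expR (- s) in near_c small_k *.
have e0 : 0 < e := expR_gt0 _.
have spread : ((r - rho v) - (r - c)) ^+ 2 <= e ^+ 2.
  have -> : (r - rho v) - (r - c) = - (rho v - c) by ring.
  by rewrite sqrrN -real_normK ?num_real // ler_sqr ?nnegrE // ltW.
apply: le_trans (ler_wpM2l (normr_ge0 _) (sqr_spread_le_max e0 spread small_k)) _.
rewrite maxr_pMr ?normr_ge0 // ge_max; apply/andP; split; first exact: c3_le_supnorm_orbit.
have [+ _ _] := norm_coord_le_supnorm w; apply: le_trans.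
rewrite c1_orbit // !normrM (ger0_norm (expR_ge0 s)) (@ger0_norm _ 2^-1) ?invr_ge0 ?ler0n //.
by rewrite /e expRN le_eqVlt; apply/orP; left; apply/eqP; field; rewrite gt_eqF ?expR_gt0.
Qed.

Lemma expR_mul3_le_sqr s : 0 <= s -> expR (- (3 * s)) <= expR (- s) ^+ 2.
Proof. by move=> s0; rewrite -expRM_natl ler_expR; lra. Qed.

Lemma kappa_orbit_ge_small s r v : 0 <= s -> c3 v != 0 -> `|kappa0 v| < expR (- (3 * s)) ->
  expR s ^+ 2 * `|kappa0 v| <= kappa (mact (a_mat s *m u_mat r) v).
Proof.
move=> s0 v3 small_k; apply: kappa_orbit_ge => //.
apply: le_trans (_ : expR s ^+ 2 * expR (- (3 * s)) <= 1).
  by rewrite ler_pM2l ?exprn_gt0 ?expR_gt0 // ltW.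
by rewrite -expRM_natl -expRD expR_le1; lra.
Qed.

End OrbitEstimate.

Section Phi.
Variable R : realType.
Implicit Types (v : 'rV[R]_3) (delta s r : R).

Lemma ln_mul_le (a b x : R) : 0 < a -> 0 < b -> a * b <= x -> ln a + ln b <= ln x.
Proof.
move=> a0 b0 abx; have ab0 : 0 < a * b by rewrite mulr_gt0.
by rewrite -lnM ?posrE // ler_ln ?posrE //; apply: lt_le_trans abx.
Qed.

Lemma ln_le_mul (a b x : R) : 0 < a -> 0 < b -> 0 < x -> x <= a * b -> ln x <= ln a + ln b.
Proof. by move=> a0 b0 x0 xab; rewrite -lnM ?posrE // ler_ln ?posrE ?mulr_gt0. Qed.

Definition phi_fin delta (k n : R) := expR (-2 * delta * ln k + (-1 - delta) * ln n).

Lemma phiE delta v : kappa v != 0 \/ delta = 0 -> 0 < supnorm v ->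
  phi delta v = (phi_fin delta (kappa v) (supnorm v))%:E.
Proof.
move=> k0_or_d0 n0; rewrite /phi /phi_fin.
have [k0|k0] := eqVneq (kappa v) 0; last by rewrite /powR (negPf k0) gt_eqF // -expRD.
have -> : delta = 0 by case: k0_or_d0 => //; rewrite k0 eqxx.
by rewrite eqxx k0 mulr0 mul0r add0r subr0 mulN1r expRN lnK.
Qed.

Lemma phi_ge0 delta v : (0 <= phi delta v)%E.
Proof.
rewrite /phi; case: ifP => _; last by rewrite lee_fin mulr_ge0 // powR_ge0.
by case: ifP => _ //; rewrite lee_fin invr_ge0 supnorm_ge0.
Qed.

Lemma kappa_neq0_finite_phi delta v m : delta != 0 -> (phi delta v <= m%:E)%E -> kappa v != 0.
Proof.
by move=> d0; apply: contraTneq => k0; rewrite /phi k0 eqxx (negPf d0) leye_eq.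
Qed.

Lemma phi_fin_contract delta s (k k' n n' t h : R) :
  0 <= delta -> 1 <= s -> 0 < t -> 0 < h -> 0 < n -> 0 < k \/ delta = 0 ->
  expR s ^+ 2 * k <= k' -> t * expR (- s) <= n' -> t * h <= n' -> n <= 5 / 2 * t ->
  phi_fin delta k' n' <= 5 / 2 * expR (- (delta * s)) * phi_fin delta k n / h.
Proof.
move=> d0 s1 t0 h0 n0 k0_or_d0 kk' n'e n'h nt.
have ln_n'e : ln t - s <= ln n' by have := ln_mul_le t0 (expR_gt0 _) n'e; rewrite expRK.
have ln_n'h := ln_mul_le t0 h0 n'h.
have ln_nt : ln n <= ln (5 / 2) + ln t by apply: ln_le_mul.
(* [(5/2)^delta <= e^(2 delta s)] because [ln (5/2) <= 2 <= 2 s]. *)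
have ln52 : ln (5 / 2) <= 2 :> R.
  rewrite -[X in _ <= X](expRK 2) ler_ln ?posrE ?expR_gt0 //.
  by have := expR_ge1Dx (2 : R); lra.
have ln_kk' : delta * (2 * s + ln k) <= delta * ln k'.
  case: k0_or_d0 => [k0|->]; last by rewrite !mul0r.
  rewrite ler_wpM2l //; have := ln_mul_le (exprn_gt0 2 (expR_gt0 s)) k0 kk'.
  by rewrite -expRM_natl expRK.
rewrite -[h]lnK ?posrE // -expRN /phi_fin -[5 / 2]lnK ?posrE // -!expRD ler_expR.
have := ler_wpM2l d0 ln_n'e; have := ler_wpM2l d0 ln_nt.
have : delta * ln (5 / 2) <= delta * (2 * s) by apply: ler_wpM2l => //; lra.
nra.
Qed.

Lemma lorentzian_orbit_width s r c :
  8 * lorentzian (expR s / 4) c r = ((expR (- s) + (r - c) ^+ 2 / (16 * expR (- s))) / 2)^-1.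
Proof.
rewrite /lorentzian expRN; field.
have E0 := expR_gt0 s.
rewrite gt_eqF //=; apply: lt0r_neq0.
by have := mulr_ge0 (mulr_ge0 (sqr_ge0 (r - c)) (ltW E0)) (ltW E0); lra.
Qed.

Lemma phi_fin_orbit_le delta s r c v :
  0 <= delta -> 1 <= s -> c3 v != 0 -> `|rho v| < 2 -> `|kappa0 v| < expR (- (3 * s)) ->
  kappa v = `|kappa0 v| -> kappa v != 0 \/ delta = 0 -> `|rho v - c| <= expR (- s) ->
  phi_fin delta (kappa (mact (a_mat s *m u_mat r) v))
    (supnorm (mact (a_mat s *m u_mat r) v)) <=
    20 * expR (- (delta * s)) * phi_fin delta (kappa v) (supnorm v) *
      lorentzian (expR s / 4) c r.
Proof.
move=> d0 s1 v3 rho2 small_k kv k0_or_d0 near_c.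
have s0 : 0 <= s by lra.
have k_le_e2 := le_trans (ltW small_k) (expR_mul3_le_sqr s0).
have k_le1 : `|kappa0 v| <= 1.
  by apply: le_trans k_le_e2 (exprn_ile1 2 (expR_ge0 _) _); rewrite expR_le1; lra.
set h := (expR (- s) + (r - c) ^+ 2 / (16 * expR (- s))) / 2.
have h0 : 0 < h by rewrite divr_gt0 ?ltr_pwDl ?divr_ge0 ?sqr_ge0 ?mulr_ge0 ?expR_gt0 ?expR_ge0.
have -> : lorentzian (expR s / 4) c r = h^-1 / 8 by rewrite -lorentzian_orbit_width; field.
rewrite [X in _ <= X](_ : _ = 5 / 2 * expR (- (delta * s)) *
  phi_fin delta (kappa v) (supnorm v) / h); last by field; rewrite gt_eqF.
rewrite kv in k0_or_d0 *; apply: (phi_fin_contract (t := `|c3 v|)) => //.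
- by rewrite normr_gt0.
- exact: supnorm_gt0.
- by case: k0_or_d0 => [k0|]; [left; rewrite lt0r k0 normr_ge0 | right].
- exact: kappa_orbit_ge_small.
- exact: c3_le_supnorm_orbit.
- exact: width_le_supnorm_orbit (le_trans (ler_norm _) k_le_e2).
- exact: supnorm_le_c3.
Qed.

End Phi.

Section Clusters.
Variable R : realType.
Implicit Types (v : 'rV[R]_3).

Lemma near_two_roots (a D e : R) : 0 <= e -> exists c : R * R,
  forall x, `|(x - a) ^+ 2 - D| <= e ^+ 2 -> `|x - c.1| <= e \/ `|x - c.2| <= e.
Proof.
move=> e0; have [D0|D0] := leP 0 D; last first.
  exists (a, a) => x /ler_normlW near_a; left.
  by rewrite /= -(ger0_norm e0) -ler_sqr ?nnegrE // !real_normK ?num_real //; lra.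
exists (a + Num.sqrt D, a - Num.sqrt D) => x /=.
have -> : (x - a) ^+ 2 - D = (x - (a + Num.sqrt D)) * (x - (a - Num.sqrt D)).
  by rewrite -[in LHS](sqr_sqrtr D0); ring.
rewrite normrM; set y := `|_ - _|; set z := `|_ - _| => yz.
have [|y_far] := leP y e; first by left.
have [|z_far] := leP z e; first by right.
by have := ltr_pM e0 e0 y_far z_far; rewrite -expr2; lra.
Qed.

Lemma normal_vector (L : 'M[R]_3) : \rank L = 2%N -> exists n1 n2 n3 : R,
  [/\ [|| n1 != 0, n2 != 0 | n3 != 0] &
      forall v, (v <= L)%MS -> n1 * c1 v + n2 * c2 v + n3 * c3 v = 0].
Proof.
move=> rL; set K := cokermx L.
have [[i [j Kij]]|K0] := pselect (exists i j, K i j != 0); last first.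
  suff K_0 : K = 0 by have := mxrank_coker L; rewrite -/K K_0 mxrank0 rL => /eqP.
  apply/matrixP => i j; rewrite [RHS]mxE.
  by apply/eqP/negPn/negP => Kij; apply: K0; exists i, j.
exists (K 0 j), (K 1 j), (K 2%:R j); split.
  by move: Kij; case: i => [[|[|[|//]]] hi] Kij; apply/or3P;
    [apply: Or31 | apply: Or32 | apply: Or33]; move: Kij; congr (K _ j != 0); exact: val_inj.
move=> v /submxP [A ->].
have : (A *m L *m K) 0 j = 0 by rewrite -mulmxA mulmx_coker mulmx0 mxE.
rewrite mxE !big_ord_recl big_ord0 addr0 /c1 /c2 /c3.
have -> : lift ord0 (ord0 : 'I_2) = 1 :> 'I_3 by exact: val_inj.
have -> : lift ord0 (lift ord0 (ord0 : 'I_1)) = 2%:R :> 'I_3 by exact: val_inj.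
by move=> <-; ring.
Qed.

Lemma kappa0_in_plane (n1 n2 n3 : R) v : n1 != 0 -> c3 v != 0 ->
  n1 * c1 v + n2 * c2 v + n3 * c3 v = 0 ->
  kappa0 v = (rho v - n2 / n1) ^+ 2 - ((n2 / n1) ^+ 2 - 2 * (n3 / n1)).
Proof.
move=> n10 v3 /eqP; rewrite -addrA addr_eq0 => /eqP plane.
rewrite /kappa0 /Q0 /rho.
have -> : c1 v = - (n2 * c2 v + n3 * c3 v) / n1 by rewrite -plane mulrC mulKf.
by field; rewrite n10 v3.
Qed.

Lemma rho_clusters (L : 'M[R]_3) (e : R) (T : set 'rV[R]_3) : \rank L = 2%N -> 0 <= e ->
  (forall v, T v -> [/\ (v <= L)%MS, c3 v != 0 & `|kappa0 v| <= e ^+ 2]) ->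
  exists c : R * R, forall v, T v -> `|rho v - c.1| <= e \/ `|rho v - c.2| <= e.
Proof.
move=> rL e0 hT; have [n1 [n2 [n3 [nz plane]]]] := normal_vector rL.
have [n10|n10] := eqVneq n1 0; last first.
  have [c near_c] := near_two_roots (n2 / n1) ((n2 / n1) ^+ 2 - 2 * (n3 / n1)) e0.
  exists c => v /hT [vL v3 small_k]; apply: near_c.
  by rewrite -(kappa0_in_plane n10 v3 (plane v vL)).
have [n20|n20] := eqVneq n2 0.
  exists (0, 0) => v /hT [vL v3 _]; have := plane v vL.
  move: nz; rewrite n10 n20 !mul0r !add0r eqxx /= => n30 /eqP.
  by rewrite mulf_eq0 (negPf n30) (negPf v3).
exists (n3 / n2, n3 / n2) => v /hT [vL v3 _]; left.
have := plane v vL; rewrite n10 mul0r add0r => plane_v.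
have -> : rho v - n3 / n2 = - (n2 * c2 v + n3 * c3 v) / (n2 * c3 v).
  by rewrite /rho; field; rewrite n20 v3.
by rewrite plane_v oppr0 mul0r normr0.
Qed.

End Clusters.

(* [ge0_le_integral] needs measurability, which fails for suprema over an
   arbitrary set of vectors. *)
Lemma ge0_le_integral_nonmeasurable (R : realType) (d : measure_display)
    (X : measurableType d) (mu : {measure set X -> \bar R}) (D : set X) (f g : X -> \bar R) :
  (forall x, D x -> (0 <= f x)%E) -> (forall x, D x -> (f x <= g x)%E) ->
  (\int[mu]_(x in D) f x <= \int[mu]_(x in D) g x)%E.
Proof.
move=> f0 fg; have g0 x : D x -> (0 <= g x)%E by move=> Dx; exact: le_trans (f0 x Dx) (fg x Dx).
rewrite ge0_integralE // [X in (_ <= X)%E]ge0_integralE //.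
apply: ereal_sup_le => _ [h /= hf <-]; exists h => //= x.
by apply: le_trans (hf x) _; rewrite /patch; case: ifP => // /[1!inE] /fg.
Qed.

Lemma le_pmul_ereal_sup (R : realType) (c : R) (S : set \bar R) (x : \bar R) : 0 < c ->
  (exists2 y, S y & (0 <= y)%E) ->
  (forall m : R, ubound S m%:E -> (x <= (c * m)%:E)%E) -> (x <= c%:E * ereal_sup S)%E.
Proof.
move=> c0 [y Sy y0] ub; have sup0 : (0 <= ereal_sup S)%E.
  by apply: le_trans y0 _; exact: ereal_sup_ubound.
have [->|supoo] := eqVneq (ereal_sup S) +oo%E; first by rewrite muleC gt0_mulye ?lte_fin // leey.
have sup_fin : ereal_sup S \is a fin_num by rewrite ge0_fin_numE // lt_neqAle supoo leey.
rewrite -(fineK sup_fin) -EFinM; apply: ub.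
by rewrite (fineK sup_fin) => z; exact: ereal_sup_ubound.
Qed.

Section OrbitIntegral.
Variables (R : realType) (delta s m : R) (L : 'M[R]_3) (T : set 'rV[R]_3).
Hypotheses (d0 : 0 <= delta) (s1 : 1 <= s) (rL : \rank L = 2%N).
Hypothesis TL : forall v, T v -> (v <= L)%MS /\ kappa v < expR (- (3 * s)).
Hypothesis Tm : forall v, T v -> (phi delta v <= m%:E)%E.

Let s0 : 0 <= s := le_trans ler01 s1.

Lemma T_kappa v : T v ->
  [/\ c3 v != 0, `|rho v| < 2, kappa v = `|kappa0 v| & `|kappa0 v| < expR (- (3 * s))].
Proof.
move=> /TL [_ k_small].
have e3 : expR (- (3 * s)) <= 1 by rewrite expR_le1 oppr_le0 mulr_ge0.
by have [v3 rho2 kv] := kappa_lt1 (lt_le_trans k_small e3); rewrite -kv.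
Qed.

Lemma T_phi_fin v : T v ->
  (kappa v != 0 \/ delta = 0) /\ phi_fin delta (kappa v) (supnorm v) <= m.
Proof.
move=> Tv; have [v3 _ _ _] := T_kappa Tv.
have k0_or_d0 : kappa v != 0 \/ delta = 0.
  have [->|dn0] := eqVneq delta 0; first by right.
  by left; exact: kappa_neq0_finite_phi dn0 (Tm Tv).
by split => //; rewrite -lee_fin -phiE ?supnorm_gt0 //; exact: Tm.
Qed.

Lemma T_clusters : exists c : R * R,
  forall v, T v -> `|rho v - c.1| <= expR (- s) \/ `|rho v - c.2| <= expR (- s).
Proof.
apply: rho_clusters rL (expR_ge0 _) _ => v Tv; have [vL _] := TL Tv.
have [v3 _ _ k_small] := T_kappa Tv.
by split => //; exact: le_trans (ltW k_small) (expR_mul3_le_sqr s0).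
Qed.

Lemma orbit_sup_le_lorentzians (c : R * R) :
  (forall v, T v -> `|rho v - c.1| <= expR (- s) \/ `|rho v - c.2| <= expR (- s)) ->
  forall r, (ereal_sup [set phi delta (mact (a_mat s *m u_mat r) v) | v in T] <=
    (20 * expR (- (delta * s)) * m *
      (lorentzian (expR s / 4) c.1 r + lorentzian (expR s / 4) c.2 r))%:E)%E.
Proof.
move=> near_c r; apply: ge_ereal_sup => _ [v Tv <-].
have [v3 rho2 kv k_small] := T_kappa Tv; have [k0_or_d0 phim] := T_phi_fin Tv.
have w3 : c3 (mact (a_mat s *m u_mat r) v) != 0.
  by rewrite c3_orbit // mulf_neq0 // invr_eq0 gt_eqF ?expR_gt0.
have kw0 : kappa (mact (a_mat s *m u_mat r) v) != 0 \/ delta = 0.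
  case: k0_or_d0 => [k0|]; [left | by right].
  apply: lt0r_neq0; apply: lt_le_trans (kappa_orbit_ge_small r s0 v3 k_small).
  by rewrite mulr_gt0 ?exprn_gt0 ?expR_gt0 // -kv lt0r k0 kappa_ge0.
rewrite phiE ?supnorm_gt0 // lee_fin.
set w := mact _ v in w3 kw0 *.
have bound c' : `|rho v - c'| <= expR (- s) -> phi_fin delta (kappa w) (supnorm w) <=
    20 * expR (- (delta * s)) * m * lorentzian (expR s / 4) c' r.
  move=> near_c'.
  apply: le_trans (phi_fin_orbit_le r d0 s1 v3 rho2 k_small kv k0_or_d0 near_c') _.
  by rewrite ler_wpM2r ?lorentzian_ge0 ?divr_ge0 ?expR_ge0 // ler_wpM2l ?mulr_ge0 ?expR_ge0.
have m0 : 0 <= m := le_trans (expR_ge0 _) phim.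
have L0 c' : 0 <= lorentzian (expR s / 4) c' r by rewrite lorentzian_ge0 ?divr_ge0 ?expR_ge0.
have K0 : 0 <= 20 * expR (- (delta * s)) * m by rewrite !mulr_ge0 ?expR_ge0.
by case: (near_c v Tv) => /bound /le_trans -> //; rewrite ler_wpM2l // ?lerDl ?lerDr.
Qed.

Lemma integral_orbit_sup_le : (exists v, T v) ->
  (\int[lebesgue_measure]_(r in `[(-1)%R, 1%R])
      ereal_sup [set phi delta (mact (a_mat s *m u_mat r) v) | v in T]
   <= (40 * pi * expR (- (delta * s)) * m)%:E)%E.
Proof.
move=> [v0 Tv0]; have [c near_c] := T_clusters.
have m0 : 0 <= m by have [_] := T_phi_fin Tv0; exact: le_trans (expR_ge0 _).
apply: le_trans.
  apply: ge0_le_integral_nonmeasurable => r _; last exact: orbit_sup_le_lorentzians near_c r.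
  apply: le_trans (phi_ge0 delta (mact (a_mat s *m u_mat r) v0)) _.
  by apply: ereal_sup_ubound; exists v0.
have -> : 40 * pi * expR (- (delta * s)) * m = 20 * expR (- (delta * s)) * m * (pi *+ 2).
  by rewrite mulr2n; ring.
by apply: integral_lorentzian_pair_le; rewrite ?mulr_ge0 ?divr_ge0 ?expR_ge0 //; lra.
Qed.

End OrbitIntegral.

Theorem proposition4p5 (R : realType) (delta s : R) (D : set 'rV[R]_3) (L : 'M[R]_3)
  (T : set 'rV[R]_3) :
  0 <= delta -> delta <= 1 / 100 -> 1 <= s ->
  unimodular_lattice D -> rational_plane D L ->
  T `<=` Omega D L s ->
  (\int[@lebesgue_measure R]_(r in `[(-1)%R, 1%R])
      ereal_sup [set phi delta (mact (a_mat s *m u_mat r) v) | v in T]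
   <= (200 * expR (- (delta * s)))%:E * ereal_sup [set phi delta v | v in T])%E.
Proof.
move=> d0 _ s1 _ [rL _] TO.
have TL v : T v -> (v <= L)%MS /\ kappa v < expR (- (3 * s)) by move=> /TO [].
have [[v0 Tv0]|T0] := pselect (exists v, T v); last first.
  have -> : T = set0 by apply/seteqP; split => // v Tv; apply: T0; exists v.
  under eq_integral do rewrite image_set0 ereal_sup0.
  rewrite integral_cst //= lebesgue_measure_itv /= ifT ?lte_fin; last lra.
  by rewrite gt0_mulNye ?leNye // -EFinD lte_fin; lra.
apply: le_pmul_ereal_sup => [| |m Tm]; first by rewrite mulr_gt0 ?expR_gt0.
  by exists (phi delta v0); [exists v0 | exact: phi_ge0].
have {}Tm v : T v -> (phi delta v <= m%:E)%E by move=> Tv; apply: Tm; exists v.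
have m0 : 0 <= m by rewrite -lee_fin; exact: le_trans (phi_ge0 _ _) (Tm v0 Tv0).
apply: le_trans (integral_orbit_sup_le d0 s1 rL TL Tm (ex_intro _ v0 Tv0)) _.
rewrite lee_fin ler_wpM2r // ler_wpM2r ?expR_ge0 //.
by have := pihalf_lt2 R; have := pi_gt0 R; lra.
Qed.
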